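(* Let $\mathcal C$ be an $R$-coring satisfying the left $\alpha$-condition, and suppose $\mathcal C=\bigoplus_{i\in I}C_i$ as left $\mathcal C$-comodules with each $C_i$ finitely generated (as a left $R$-module). Then $\mathrm{Rat}^{\mathcal C}({}^*\mathcal C)$ is dense in ${}^*\mathcal C$ in the finite topology, and equivalently, $\mathrm{Rat}^{\mathcal C}$ is an exact functor.
   Context: An $R$-coring is a triple $(\mathcal C,\Delta,\varepsilon)$ with $\mathcal C$ an $R$-bimodule and $\Delta:\mathcal C\to\mathcal C\otimes_R\mathcal C$, $\varepsilon:\mathcal C\to R$ coassociative and counital $R$-bimodule maps; write $\Delta(c)=c_{(1)}\otimes_R c_{(2)}$. ${}^*\mathcal C={}_R\mathrm{Hom}(\mathcal C,R)$ is a ring with product $(f\#g)(c)=g(c_{(1)}f(c_{(2)}))$. $\mathcal C$ satisfies the left $\alpha$-condition if it is locally projective as a left $R$-module; then right $\mathcal C$-comodules form a full subcategory of right ${}^*\mathcal C$-modules (a comodule $N$, $n\mapsto n_{[0]}\otimes n_{[1]}$, acts by $n\cdot f=n_{[0]}f(n_{[1]})$). For a right ${}^*\mathcal C$-module $M$, $\mathrm{Rat}^{\mathcal C}(M)$ is the set of $m\in M$ for which there is $\sum_i m_i\otimes c_i\in M\otimes_R\mathcal C$ with $m\cdot f=\sum_i m_if(c_i)$ for all $f\in{}^*\mathcal C$; $\mathrm{Rat}^{\mathcal C}$ is a left exact functor from right ${}^*\mathcal C$-modules to right $\mathcal C$-comodules. Left $\mathcal C$-comodules are left $R$-modules with coassociative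 counital coactions $m\mapsto m_{[-1]}\otimes m_{[0]}\in\mathcal C\otimes_R M$. The finite topology on ${}^*\mathcal C$ has basic open sets $\{g\mid g(c)=f(c)\ \forall c\in F\}$, $F\subseteq\mathcal C$ finite. *)

From HB Require Import structures.
From mathcomp Require Import all_boot all_order all_algebra.
Set Implicit Arguments. Unset Strict Implicit. Unset Printing Implicit Defensive.
Import GRing.Theory.
Local Open Scope ring_scope.

Section Corings.
Variable R : nzRingType.

Definition lmod_ax (M : zmodType) (a : R -> M -> M) : Prop :=
  [/\ (forall r x y, a r (x + y) = a r x + a r y),
      (forall r s x, a (r + s) x = a r x + a s x),
      (forall r s x, a (r * s) x = a r (a s x)) &
      (forall x, a 1 x = x)].

Definition rmod_ax (M : zmodType) (b : M -> R -> M) : Prop :=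
  [/\ (forall x y r, b (x + y) r = b x r + b y r),
      (forall x r s, b x (r + s) = b x r + b x s),
      (forall x r s, b x (r * s) = b (b x r) s) &
      (forall x, b x 1 = x)].

Definition bimod_ax (M : zmodType) (a : R -> M -> M) (b : M -> R -> M) : Prop :=
  [/\ lmod_ax a, rmod_ax b & forall r x s, a r (b x s) = b (a r x) s].

Definition lmorph (M N : zmodType) (aM : R -> M -> M) (aN : R -> N -> N)
  (h : M -> N) : Prop :=
  (forall x y, h (x + y) = h x + h y) /\ (forall r x, h (aM r x) = aN r (h x)).

(* ---------- tensor products, via the universal property ----------
   A finite list s of pairs represents sum_{(m,n) in s} m (x) n in M (x)_R N.
   Two such lists represent the same tensor iff every R-balanced biadditive
   map into any abelian group takes the same value on them. *)
Definition balanced2 (M N A : zmodType) (bM : M -> R -> M) (aN : R -> N -> N)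
  (t : M -> N -> A) : Prop :=
  [/\ (forall x y n, t (x + y) n = t x n + t y n),
      (forall m x y, t m (x + y) = t m x + t m y) &
      (forall m r n, t (bM m r) n = t m (aN r n))].

Definition tens_eq (M N : zmodType) (bM : M -> R -> M) (aN : R -> N -> N)
  (s s' : seq (M * N)) : Prop :=
  forall (A : zmodType) (t : M -> N -> A), balanced2 bM aN t ->
    \sum_(p <- s) t p.1 p.2 = \sum_(p <- s') t p.1 p.2.

Definition balanced3 (C A : zmodType) (aC : R -> C -> C) (bC : C -> R -> C)
  (t : C -> C -> C -> A) : Prop :=
  [/\ (forall x x' y z, t (x + x') y z = t x y z + t x' y z),
      (forall x y y' z, t x (y + y') z = t x y z + t x y' z),
      (forall x y z z', t x y (z + z') = t x y z + t x y z'),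
      (forall x r y z, t (bC x r) y z = t x (aC r y) z) &
      (forall x y r z, t x (bC y r) z = t x y (aC r z))].

Definition tens3_eq (C : zmodType) (aC : R -> C -> C) (bC : C -> R -> C)
  (s s' : seq (C * C * C)) : Prop :=
  forall (A : zmodType) (t : C -> C -> C -> A), balanced3 aC bC t ->
    \sum_(p <- s) t p.1.1 p.1.2 p.2 = \sum_(p <- s') t p.1.1 p.1.2 p.2.

Variable C : zmodType.
(* left action, right action, comultiplication (Delta c is a list
   representing c_(1) (x) c_(2)), counit *)
Variables (lC : R -> C -> C) (rC : C -> R -> C)
          (Delta : C -> seq (C * C)) (eps : C -> R).

Definition is_coring : Prop :=
  [/\ bimod_ax lC rC,
      (* Delta is an R-bimodule map C -> C (x)_R C *)
      [/\ (forall c d, tens_eq rC lC (Delta (c + d)) (Delta c ++ Delta d)),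
          (forall r c, tens_eq rC lC (Delta (lC r c))
                                [seq (lC r p.1, p.2) | p <- Delta c]) &
          (forall c r, tens_eq rC lC (Delta (rC c r))
                                [seq (p.1, rC p.2 r) | p <- Delta c])],
      [/\ (forall c d, eps (c + d) = eps c + eps d),
          (forall r c, eps (lC r c) = r * eps c) &
          (forall c r, eps (rC c r) = eps c * r)],
      (forall c, tens3_eq lC rC
          [seq (q.1, q.2, p.2) | p <- Delta c, q <- Delta p.1]
          [seq (p.1, q.1, q.2) | p <- Delta c, q <- Delta p.2]) &
      (forall c, \sum_(p <- Delta c) lC (eps p.1) p.2 = c /\
                 \sum_(p <- Delta c) rC p.1 (eps p.2) = c)].

(* left alpha-condition: C is locally projective as a left R-module
   (Zimmermann-Huisgen): for every epimorphism p : L -> N of left R-modules,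
   every g : C -> N and every finite subset F of C (equivalently the
   finitely generated submodule it spans) there is h : C -> L with
   p o h = g on F. *)
Definition loc_proj_left : Prop :=
  forall (L N : zmodType) (aL : R -> L -> L) (aN : R -> N -> N),
    lmod_ax aL -> lmod_ax aN ->
    forall p : L -> N, lmorph aL aN p -> (forall y, exists x, p x = y) ->
    forall g : C -> N, lmorph lC aN g ->
    forall F : seq C, exists h : C -> L,
      lmorph lC aL h /\ (forall x, x \in F -> p (h x) = g x).

Definition left_alpha_condition : Prop := loc_proj_left.

(* ---------- the ring *C = _R Hom(C, R) ---------- *)
Definition ldual (f : C -> R) : Prop :=
  (forall x y, f (x + y) = f x + f y) /\ (forall r x, f (lC r x) = r * f x).

Definition dmul (f g : C -> R) : C -> R :=
  fun c => \sum_(p <- Delta c) g (rC p.1 (f p.2)).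

Definition iota (r : R) : C -> R := fun c => eps c * r.

(* right *C-modules; only the values of act on elements of *C matter *)
Definition rdmod_ax (M : zmodType) (act : M -> (C -> R) -> M) : Prop :=
  [/\ (forall m m' f, ldual f -> act (m + m') f = act m f + act m' f),
      (forall m f g, ldual f -> ldual g ->
                     act m (fun c => f c + g c) = act m f + act m g),
      (forall m f g, ldual f -> ldual g -> act m (dmul f g) = act (act m f) g) &
      (forall m, act m eps = m)].

Definition dmorph (M N : zmodType) (aM : M -> (C -> R) -> M)
  (aN : N -> (C -> R) -> N) (h : M -> N) : Prop :=
  (forall x y, h (x + y) = h x + h y) /\
  (forall m f, ldual f -> h (aM m f) = aN (h m) f).

(* m in Rat^C(M): there is sum_k m_k (x) c_k in M (x)_R C with
   m . f = sum_k m_k f(c_k) for all f in *C; the right R-action on M is the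
   one induced by iota *)
Definition rat_el (M : zmodType) (act : M -> (C -> R) -> M) (m : M) : Prop :=
  exists n (ms : 'I_n -> M) (cs : 'I_n -> C),
    forall f, ldual f -> act m f = \sum_(k < n) act (ms k) (iota (f (cs k))).

(* Rat^C( *C ), *C regarded as a right module over itself *)
Definition rat_dual (g : C -> R) : Prop :=
  ldual g /\
  exists n (hs : 'I_n -> C -> R) (cs : 'I_n -> C),
    (forall k, ldual (hs k)) /\
    forall f, ldual f -> forall c,
      dmul g f c = \sum_(k < n) dmul (hs k) (iota (f (cs k))) c.

(* density of Rat^C( *C ) in *C for the finite topology *)
Definition rat_dense : Prop :=
  forall f, ldual f -> forall F : seq C,
    exists g, rat_dual g /\ (forall x, x \in F -> g x = f x).

(* Rat^C is exact: it sends exact sequences M1 -> M2 -> M3 of right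
   *C-modules to exact sequences (Rat^C u, Rat^C v are the restrictions;
   im (Rat u) <= ker (Rat v) is automatic, so only the other inclusion is
   stated). *)
Definition rat_exact : Prop :=
  forall (M1 M2 M3 : zmodType) (a1 : M1 -> (C -> R) -> M1)
         (a2 : M2 -> (C -> R) -> M2) (a3 : M3 -> (C -> R) -> M3),
    rdmod_ax a1 -> rdmod_ax a2 -> rdmod_ax a3 ->
    forall (u : M1 -> M2) (v : M2 -> M3), dmorph a1 a2 u -> dmorph a2 a3 v ->
    (forall y, v y = 0 <-> exists x, u x = y) ->
    forall y, rat_el a2 y -> v y = 0 -> exists x, rat_el a1 x /\ u x = y.

Definition lsubmod (D : C -> Prop) : Prop :=
  [/\ D 0, (forall x y, D x -> D y -> D (x + y)),
      (forall x, D x -> D (- x)) & (forall r x, D x -> D (lC r x))].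

(* D is a left subcomodule of C: Delta(D) lies in C (x)_R D
   (C (x)_R D -> C (x)_R C is injective since D is a direct summand) *)
Definition left_subcomod (D : C -> Prop) : Prop :=
  lsubmod D /\
  forall d, D d -> exists n (xs ys : 'I_n -> C),
    (forall k, D (ys k)) /\
    tens_eq rC lC (Delta d) [seq (xs k, ys k) | k <- enum 'I_n].

Definition fg_left (D : C -> Prop) : Prop :=
  exists n (gs : 'I_n -> C), (forall k, D (gs k)) /\
    forall d, D d -> exists rs : 'I_n -> R, d = \sum_(k < n) lC (rs k) (gs k).

Definition direct_sum (I : Type) (D : I -> C -> Prop) : Prop :=
  (forall c, exists n (ix : 'I_n -> I) (xs : 'I_n -> C),
      (forall k, D (ix k) (xs k)) /\ c = \sum_(k < n) xs k) /\
  (forall i d n (ix : 'I_n -> I) (xs : 'I_n -> C),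
      (forall k, ix k <> i) -> (forall k, D (ix k) (xs k)) ->
      D i d -> d = \sum_(k < n) xs k -> d = 0).

End Corings.

(* Write pr_i : C -> C for the projection onto C_i along the other summands.
   - Since C is locally projective and C_i = pr_i(C) is finitely generated,
     C_i has a finite dual basis: pr_i(c) = sum_k e_k(c) g_k with e_k in *C
     (Section FiniteDualBasis, for any locally projective module).
   - Since C_i is a left subcomodule, (f o pr_i) # h = (f # h) o pr_i; with the
     dual basis this exhibits f o pr_i as an element of Rat^C( *C ).
   - A finite subset of C lies in finitely many summands C_i, i in J, and there
     f agrees with sum_{i in J} f o pr_i, which is rational: this is density.
   - Density gives exactness: if y = u x is rational with coefficients c_k,
     a rational g agreeing with eps on the c_k yields the rational preimage x.g. *)
From Pilot Require Import Defs.
From mathcomp Require Import all_boot all_order all_algebra.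
From Stdlib Require Import ClassicalEpsilon FunctionalExtensionality.
From Stdlib Require List.
Set Implicit Arguments. Unset Strict Implicit. Unset Printing Implicit Defensive.
Import GRing.Theory.
Local Open Scope ring_scope.

Section AdditiveMaps.
Variables (A B : zmodType) (phi : A -> B).
Hypothesis phiD : {morph phi : x y / x + y}.

Lemma additive0 : phi 0 = 0.
Proof. by apply/(addrI (phi 0)); rewrite -phiD !addr0. Qed.

Lemma additiveN x : phi (- x) = - phi x.
Proof. by apply/(addrI (phi x)); rewrite -phiD !subrr additive0. Qed.

Lemma additive_sum (T : Type) (s : seq T) (F : T -> A) :
  phi (\sum_(t <- s) F t) = \sum_(t <- s) phi (F t).
Proof. by elim: s => [|t s IH]; rewrite ?big_nil ?additive0 // !big_cons phiD IH. Qed.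
End AdditiveMaps.

Lemma eq_big_In (T : Type) (A : zmodType) (s : seq T) (F G : T -> A) :
  (forall t, List.In t s -> F t = G t) -> \sum_(t <- s) F t = \sum_(t <- s) G t.
Proof.
elim: s => [|t s IH] FG; rewrite ?big_nil // !big_cons FG; last by left.
by rewrite IH // => u su; apply: FG; right.
Qed.

Section LeftModules.
Variables (R : nzRingType) (M : zmodType) (a : R -> M -> M).

Section Action.
Hypothesis Ha : lmod_ax a.

Lemma lact_addr r : {morph a r : x y / x + y}.
Proof. by case: Ha => H _ _ _; exact: H. Qed.
Lemma lact_addl r s x : a (r + s) x = a r x + a s x.
Proof. by case: Ha => _ H _ _; exact: H. Qed.
Lemma lact_mul r s x : a (r * s) x = a r (a s x).
Proof. by case: Ha => _ _ H _; exact: H. Qed.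
Lemma lact1 x : a 1 x = x.
Proof. by case: Ha => _ _ _ H; exact: H. Qed.
Lemma lact0 r : a r 0 = 0.
Proof. exact: additive0 (lact_addr r). Qed.
Lemma lactN r x : a r (- x) = - a r x.
Proof. exact: additiveN (lact_addr r) x. Qed.
Lemma lact_sum r (T : Type) (s : seq T) (F : T -> M) :
  a r (\sum_(t <- s) F t) = \sum_(t <- s) a r (F t).
Proof. exact: (additive_sum (lact_addr r)). Qed.
End Action.

Section Forms.
Variable f : M -> R.
Hypothesis Hf : ldual a f.

Lemma ldual_add : {morph f : x y / x + y}.
Proof. by case: Hf. Qed.
Lemma ldual_lact r x : f (a r x) = r * f x.
Proof. by case: Hf => _; exact. Qed.
Lemma ldual0 : f 0 = 0.
Proof. exact: additive0 ldual_add. Qed.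
Lemma ldual_sum (T : Type) (s : seq T) (F : T -> M) :
  f (\sum_(t <- s) F t) = \sum_(t <- s) f (F t).
Proof. exact: (additive_sum ldual_add). Qed.
End Forms.

Lemma zero_ldual : ldual a (fun _ => 0).
Proof. by split=> [x y|r x]; rewrite ?addr0 ?mulr0. Qed.

Lemma ldual_comp (e : M -> M) (f : M -> R) :
  lmorph a a e -> ldual a f -> ldual a (fun x => f (e x)).
Proof.
move=> [eD eL] Hf; split=> [x y|r x]; first by rewrite eD (ldual_add Hf).
by rewrite eL (ldual_lact Hf).
Qed.

Lemma ldual_big (T : Type) (s : seq T) (F : T -> M -> R) :
  (forall t, ldual a (F t)) -> ldual a (fun x => \sum_(t <- s) F t x).
Proof.
move=> HF; split=> [x y|r x].
- by rewrite -big_split; apply: eq_bigr => t _; exact: ldual_add.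
- by rewrite mulr_sumr; apply: eq_bigr => t _; exact: ldual_lact.
Qed.

Section Submodules.
Variable P : M -> Prop.
Hypothesis HP : lsubmod a P.

Lemma lsub0 : P 0.
Proof. by case: HP. Qed.
Lemma lsubD x y : P x -> P y -> P (x + y).
Proof. by case: HP => _ H _ _; exact: H. Qed.
Lemma lsubN x : P x -> P (- x).
Proof. by case: HP => _ _ H _; exact: H. Qed.
Lemma lsub_lact r x : P x -> P (a r x).
Proof. by case: HP => _ _ _ H; exact: H. Qed.
Lemma lsub_sum (T : Type) (s : seq T) (F : T -> M) :
  (forall t, List.In t s -> P (F t)) -> P (\sum_(t <- s) F t).
Proof.
elim: s => [|t s IH] Ps; first by rewrite big_nil; exact: lsub0.
by rewrite big_cons; apply: lsubD; [apply: Ps; left|apply: IH => u su; apply: Ps; right].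
Qed.
End Submodules.
End LeftModules.

(* The module L = R^n (+) M maps onto M by
   cover (r, x) = sum_k r_k g_k + (x - e x); lifting [e] along [cover] on the
   finite set {g_k} gives forms e_k with e x = sum_k e_k(x) g_k. *)
Section FiniteDualBasis.
Variables (R : nzRingType) (M : zmodType) (a : R -> M -> M).
Hypotheses (Ha : lmod_ax a) (Hproj : loc_proj_left a).
Variables (e : M -> M) (n : nat) (gs : 'I_n -> M).
Hypotheses (He : lmorph a a e) (e_gs : forall k, e (gs k) = gs k)
  (e_span : forall x, exists rs : 'I_n -> R, e x = \sum_(k < n) a (rs k) (gs k)).

Let eD : {morph e : x y / x + y}. Proof. by case: He. Qed.
Let eL r x : e (a r x) = a r (e x). Proof. by case: He. Qed.

Lemma e_idem x : e (e x) = e x.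
Proof.
have [rs ->] := e_span x; rewrite (additive_sum eD).
by apply: eq_bigr => k _; rewrite eL e_gs.
Qed.

Definition cover_mod := ({ffun 'I_n -> R} * M)%type.

Definition cover_act (r : R) (v : cover_mod) : cover_mod :=
  ([ffun k => r * v.1 k], a r v.2).

Definition cover (v : cover_mod) : M :=
  \sum_(k < n) a (v.1 k) (gs k) + (v.2 - e v.2).

Let cover_eq (u w : cover_mod) : u.1 = w.1 -> u.2 = w.2 -> u = w.
Proof. by case: u w => [? ?] [? ?] /= -> ->. Qed.

Lemma cover_lmod : lmod_ax cover_act.
Proof.
split=> [r x y|r s x|r s x|x]; apply: cover_eq => /=; try apply/ffunP => k;
  rewrite ?ffunE.
- by rewrite mulrDr.
- exact: lact_addr.
- by rewrite mulrDl.
- exact: lact_addl.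
- by rewrite mulrA.
- exact: lact_mul.
- by rewrite mul1r.
- exact: lact1.
Qed.

Lemma cover_lmorph : lmorph cover_act a cover.
Proof.
split=> [x y|r x]; rewrite /cover /=.
- have -> : \sum_(k < n) a ((x + y).1 k) (gs k) =
            \sum_(k < n) a (x.1 k) (gs k) + \sum_(k < n) a (y.1 k) (gs k).
    by rewrite -big_split; apply: eq_bigr => k _; rewrite ffunE lact_addl.
  by rewrite eD opprD (addrACA x.2) [LHS]addrACA.
- rewrite lact_addr // lact_addr // lactN // eL lact_sum //; congr (_ + _).
  by apply: eq_bigr => k _; rewrite ffunE lact_mul.
Qed.

Lemma cover_surj y : exists v, cover v = y.
Proof.
have [rs Ers] := e_span y; exists ([ffun k => rs k], y).
rewrite /cover /= (eq_bigr (fun k => a (rs k) (gs k))) => [|k _]; last by rewrite ffunE.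
by rewrite -Ers addrC subrK.
Qed.

Lemma e_cover v : e (cover v) = \sum_(k < n) a (v.1 k) (gs k).
Proof.
rewrite /cover !eD (additive_sum eD) (additiveN eD) e_idem subrr addr0.
by apply: eq_bigr => k _; rewrite eL e_gs.
Qed.

Lemma finite_dual_basis : exists es : 'I_n -> M -> R,
  (forall k, ldual a (es k)) /\ forall x, e x = \sum_(k < n) a (es k x) (gs k).
Proof.
have [h [[hD hL] hgs]] := Hproj cover_lmod Ha cover_lmorph cover_surj He
  [seq gs k | k <- enum 'I_n].
have cover_h x : cover (h (e x)) = e x.
  have [rs ->] := e_span x.
  rewrite (additive_sum hD) (additive_sum (proj1 cover_lmorph)).
  apply: eq_bigr => k _; rewrite hL (proj2 cover_lmorph) hgs ?e_gs //.
  by rewrite map_f // mem_enum.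
exists (fun k x => (h (e x)).1 k); split=> [k|x].
- split=> [x y|r x]; first by rewrite eD hD ffunE.
  by rewrite eL hL ffunE.
- by rewrite -e_cover cover_h e_idem.
Qed.
End FiniteDualBasis.

Section Convolution.
Variables (R : nzRingType) (C : zmodType) (lC : R -> C -> C) (rC : C -> R -> C)
  (Delta : C -> seq (C * C)) (eps : C -> R).
Hypothesis HC : is_coring lC rC Delta eps.

Lemma coring_lmod : lmod_ax lC.
Proof. by case: HC => [[]]. Qed.
Lemma rC_addl x y r : rC (x + y) r = rC x r + rC y r.
Proof. by case: HC => [[_ [H _ _ _] _] _ _ _ _]; exact: H. Qed.
Lemma rC_addr x : {morph rC x : r s / r + s}.
Proof. by case: HC => [[_ [_ H _ _] _] _ _ _ _]; exact: H. Qed.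
Lemma rC_mul x r s : rC x (r * s) = rC (rC x r) s.
Proof. by case: HC => [[_ [_ _ H _] _] _ _ _ _]; exact: H. Qed.
Lemma lC_rC r x s : lC r (rC x s) = rC (lC r x) s.
Proof. by case: HC => [[_ _ H] _ _ _ _]; exact: H. Qed.
Lemma rC0 x : rC x 0 = 0.
Proof. exact: additive0 (rC_addr x). Qed.

Lemma eps_ldual : ldual lC eps.
Proof. by case: HC => _ _ [? ? _] _ _; split. Qed.

Lemma iota_ldual r : ldual lC (Defs.iota eps r).
Proof.
split=> [x y|s x]; rewrite /Defs.iota; first by rewrite (ldual_add eps_ldual) mulrDl.
by rewrite (ldual_lact eps_ldual) mulrA.
Qed.

Section Forms.
Variables f g : C -> R.
Hypotheses (Hf : ldual lC f) (Hg : ldual lC g).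

(* (m, c) |-> g(m f(c)) is R-balanced, so it may be evaluated on any
   representative of Delta. *)
Lemma conv_balanced : balanced2 rC lC (fun m c => g (rC m (f c))).
Proof.
split=> [x y c|m x y|m r c].
- by rewrite rC_addl (ldual_add Hg).
- by rewrite (ldual_add Hf) rC_addr (ldual_add Hg).
- by rewrite (ldual_lact Hf) rC_mul.
Qed.

Lemma conv_rep d s : tens_eq rC lC (Delta d) s ->
  dmul rC Delta f g d = \sum_(p <- s) g (rC p.1 (f p.2)).
Proof. by move=> Es; rewrite /dmul (Es _ _ conv_balanced). Qed.

Lemma convD : {morph dmul rC Delta f g : c d / c + d}.
Proof.
case: HC => _ [DeltaD _ _] _ _ _ c d.
by rewrite (conv_rep (DeltaD c d)) big_cat.
Qed.

Lemma conv0 : dmul rC Delta f g 0 = 0.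
Proof. exact: additive0 convD. Qed.

Lemma conv_sum (T : Type) (s : seq T) (F : T -> C) :
  dmul rC Delta f g (\sum_(t <- s) F t) = \sum_(t <- s) dmul rC Delta f g (F t).
Proof. exact: (additive_sum convD). Qed.

Lemma conv_lact r c : dmul rC Delta f g (lC r c) = r * dmul rC Delta f g c.
Proof.
case: HC => _ [_ DeltaL _] _ _ _.
rewrite (conv_rep (DeltaL r c)) big_map mulr_sumr /dmul.
by apply: eq_bigr => p _ /=; rewrite -lC_rC (ldual_lact Hg).
Qed.

Lemma conv_ldual : ldual lC (dmul rC Delta f g).
Proof. by split; [exact: convD|exact: conv_lact]. Qed.
End Forms.

Lemma conv_iota h r c : ldual lC h ->
  dmul rC Delta h (Defs.iota eps r) c = h c * r.
Proof.
move=> Hh; rewrite /dmul /Defs.iota -mulr_suml; congr (_ * _).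
case: HC => _ _ [_ _ eps_rC] _ /(_ c) [counit _].
rewrite -[in RHS]counit (ldual_sum Hh).
by apply: eq_bigr => p _; rewrite eps_rC (ldual_lact Hh).
Qed.

Lemma rat_dual0 : rat_dual lC rC Delta eps (fun _ => 0).
Proof.
split; first exact: zero_ldual.
exists 0%N, (fun _ _ => 0), (fun _ => 0); split=> [k|f Hf c]; first exact: zero_ldual.
by rewrite big_ord0 /dmul big1 // => p _; rewrite rC0 (ldual0 Hf).
Qed.

Lemma rat_dualD g1 g2 : rat_dual lC rC Delta eps g1 -> rat_dual lC rC Delta eps g2 ->
  rat_dual lC rC Delta eps (fun c => g1 c + g2 c).
Proof.
move=> [Hg1 [n1 [hs1 [cs1 [Hh1 E1]]]]] [Hg2 [n2 [hs2 [cs2 [Hh2 E2]]]]].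
have ldualD : ldual lC (fun c => g1 c + g2 c).
  split=> [x y|r x]; last by rewrite (ldual_lact Hg1) (ldual_lact Hg2) mulrDr.
  by rewrite (ldual_add Hg1) (ldual_add Hg2) addrACA.
pose hs k := match split k with inl k1 => hs1 k1 | inr k2 => hs2 k2 end.
pose cs k := match split k with inl k1 => cs1 k1 | inr k2 => cs2 k2 end.
split=> //; exists (n1 + n2)%N, hs, cs; split.
  by move=> k; rewrite /hs; case: (split k).
move=> f Hf c; rewrite big_split_ord /=.
have -> : dmul rC Delta (fun c => g1 c + g2 c) f c =
          dmul rC Delta g1 f c + dmul rC Delta g2 f c.
  by rewrite /dmul -big_split; apply: eq_bigr => p _; rewrite rC_addr (ldual_add Hf).
rewrite (E1 f Hf c) (E2 f Hf c) /hs /cs.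
by congr (_ + _); apply: eq_bigr => k _; rewrite ?(unsplitK (inl k)) ?(unsplitK (inr k)).
Qed.

Lemma rat_dual_sum (T : Type) (s : seq T) (G : T -> C -> R) :
  (forall t, rat_dual lC rC Delta eps (G t)) ->
  rat_dual lC rC Delta eps (fun c => \sum_(t <- s) G t c).
Proof.
move=> HG; elim: s => [|t s IH].
  rewrite (_ : (fun c => _) = fun _ => 0); first exact: rat_dual0.
  by apply: functional_extensionality => c; rewrite big_nil.
rewrite (_ : (fun c => _) = fun c => G t c + \sum_(u <- s) G u c).
  exact: rat_dualD.
by apply: functional_extensionality => c; rewrite big_cons.
Qed.
End Convolution.

(* A decomposition of c is a list of pairs
   (i, x) with x in D_i summing to c; the i-th component of c is obtained by
   summing the entries with index i of a chosen decomposition, and by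
   uniqueness of decompositions it can be computed from any decomposition. *)
Section Projections.
Variables (R : nzRingType) (C : zmodType) (lC : R -> C -> C) (rC : C -> R -> C)
  (Delta : C -> seq (C * C)) (eps : C -> R).
Hypothesis HC : is_coring lC rC Delta eps.
Variables (I : Type) (D : I -> C -> Prop).
Hypotheses (HDcomod : forall i, left_subcomod lC rC Delta (D i))
  (HDsum : direct_sum D).

Let HlC := coring_lmod HC.
Let HDsub i : lsubmod lC (D i). Proof. by case: (HDcomod i). Qed.

Definition fam_in (s : seq (I * C)) : Prop := forall q, List.In q s -> D q.1 q.2.

Definition is_dec (c : C) (s : seq (I * C)) : Prop :=
  fam_in s /\ c = \sum_(q <- s) q.2.

Lemma fam_in_cat s t : fam_in s -> fam_in t -> fam_in (s ++ t).
Proof. by move=> Hs Ht q /(@List.in_app_or _ s t)[]; [exact: Hs|exact: Ht]. Qed.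

Lemma fam_in_map (phi : C -> C) s : (forall i x, D i x -> D i (phi x)) ->
  fam_in s -> fam_in [seq (q.1, phi q.2) | q <- s].
Proof.
move=> Hphi Hs q Hq; apply List.in_map_iff in Hq.
by case: Hq => q' [<- /Hs /Hphi].
Qed.

Lemma dec_exists c : exists s, is_dec c s.
Proof.
have [n [ix [xs [Hxs ->]]]] := proj1 HDsum c.
exists [seq (ix k, xs k) | k <- enum 'I_n]; split; last by rewrite big_map enumT.
by move=> q Hq; apply List.in_map_iff in Hq; case: Hq => k [<- _]; exact: Hxs.
Qed.

Definition dec (c : C) : seq (I * C) :=
  proj1_sig (constructive_indefinite_description _ (dec_exists c)).

Lemma decP c : is_dec c (dec c).
Proof. exact: proj2_sig (constructive_indefinite_description _ (dec_exists c)). Qed.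

Lemma list_family (P : I * C -> Prop) s : (forall q, List.In q s -> P q) ->
  exists n (ix : 'I_n -> I) (xs : 'I_n -> C),
    (forall k, P (ix k, xs k)) /\ \sum_(q <- s) q.2 = \sum_(k < n) xs k.
Proof.
elim: s => [|[j x] s IH] Ps.
  have no_ord0 (k : 'I_0) : False by case: k.
  exists 0%N, (fun k => False_rect I (no_ord0 k)), (fun _ => 0).
  by split=> [k|]; [case: (no_ord0 k)|rewrite big_nil big_ord0].
have [|n [ix [xs [Pxs sum_xs]]]] := IH; first by move=> q sq; apply: Ps; right.
exists n.+1, (fun k => if unlift ord0 k is Some k' then ix k' else j),
  (fun k => if unlift ord0 k is Some k' then xs k' else x); split.
  by move=> k; case: (unlift ord0 k) => [k'|] //; apply: Ps; left.
rewrite big_cons big_ord_recl unlift_none sum_xs /=; congr (_ + _).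
by apply: eq_bigr => k _; rewrite liftK.
Qed.

Lemma dec_unique_off i d s : D i d -> fam_in s -> (forall q, List.In q s -> q.1 <> i) ->
  d = \sum_(q <- s) q.2 -> d = 0.
Proof.
move=> Dd Hs Hoff Ed.
have [n [ix [xs [Pxs sum_xs]]]] := @list_family (fun q => D q.1 q.2 /\ q.1 <> i) s
  (fun q sq => conj (Hs q sq) (Hoff q sq)).
apply: (proj2 HDsum i d n ix xs) => // [k|k|]; try by case: (Pxs k).
by rewrite Ed sum_xs.
Qed.

Definition at_index (i : I) (q : I * C) : bool :=
  if excluded_middle_informative (q.1 = i) then true else false.

Lemma at_indexP i q : reflect (q.1 = i) (at_index i q).
Proof. by rewrite /at_index; case: excluded_middle_informative => h; constructor. Qed.

Definition sel (i : I) (q : I * C) : C := if at_index i q then q.2 else 0.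

Lemma sel_at i q : q.1 = i -> sel i q = q.2.
Proof. by rewrite /sel => /at_indexP ->. Qed.
Lemma sel_off i q : q.1 <> i -> sel i q = 0.
Proof. by rewrite /sel => /at_indexP/negbTE ->. Qed.
Lemma sel_mem i q : D q.1 q.2 -> D i (sel i q).
Proof. by rewrite /sel; case: (at_indexP i q) => [<- //|_ _]; exact: lsub0. Qed.
Lemma sel_map i (phi : C -> C) q : phi 0 = 0 -> sel i (q.1, phi q.2) = phi (sel i q).
Proof. by rewrite /sel /at_index /=; case: excluded_middle_informative. Qed.

Lemma sel_sum_dec0 i s : is_dec 0 s -> \sum_(q <- s) sel i q = 0.
Proof.
move=> [Hs sum0]; set d := \sum_(q <- s) sel i q.
apply: (@dec_unique_off i d [seq (q.1, - q.2) | q <- s & ~~ at_index i q]).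
- by apply: (lsub_sum (HDsub i)) => q sq; apply: sel_mem; exact: Hs.
- apply: fam_in_map => [? ?|q Hq]; first exact: (lsubN (HDsub _)).
  by apply List.filter_In in Hq; case: Hq => /Hs.
- move=> q Hq; apply List.in_map_iff in Hq; case: Hq => q' [<- Hq'].
  by apply List.filter_In in Hq'; case: Hq' => _ /at_indexP.
- rewrite big_map big_filter sumrN; apply/eqP; rewrite -addr_eq0; apply/eqP.
  rewrite [RHS]sum0 /d [X in _ + X]big_mkcond -big_split /=; apply: eq_bigr => q _.
  by rewrite /sel; case: at_index; rewrite ?addr0 ?add0r.
Qed.

Definition pr (i : I) (c : C) : C := \sum_(q <- dec c) sel i q.

Lemma pr_dec i c s : is_dec c s -> pr i c = \sum_(q <- s) sel i q.
Proof.
move=> [Hs Ec]; have [Hd Ed] := decP c.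
apply/eqP; rewrite -subr_eq0; apply/eqP.
have := @sel_sum_dec0 i (dec c ++ [seq (q.1, - q.2) | q <- s]).
rewrite big_cat big_map [X in _ + X = _](eq_bigr (fun q => - sel i q)) ?sumrN; last first.
  by move=> q _; rewrite sel_map ?oppr0.
apply; split; last by rewrite big_cat big_map sumrN /= -Ed -Ec subrr.
by apply: fam_in_cat => //; apply: fam_in_map => // ? ?; exact: (lsubN (HDsub _)).
Qed.

Lemma pr_mem i c : D i (pr i c).
Proof. by apply: (lsub_sum (HDsub i)) => q sq; apply: sel_mem; exact: (proj1 (decP c)). Qed.

Lemma pr_id i y : D i y -> pr i y = y.
Proof.
move=> Dy; rewrite (@pr_dec i y [:: (i, y)]) ?big_seq1 ?sel_at //.
by split=> [q [<-|]|]; rewrite ?big_seq1.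
Qed.

Lemma pr_off i j y : D j y -> j <> i -> pr i y = 0.
Proof.
move=> Dy ji; rewrite (@pr_dec i y [:: (j, y)]) ?big_seq1 ?sel_off //.
by split=> [q [<-|]|]; rewrite ?big_seq1.
Qed.

Lemma prD i : {morph pr i : c d / c + d}.
Proof.
move=> c d; have [Hc Ec] := decP c; have [Hd Ed] := decP d.
rewrite (@pr_dec i (c + d) (dec c ++ dec d)) ?big_cat //.
by split; [exact: fam_in_cat|rewrite big_cat -Ec -Ed].
Qed.

Lemma pr_lact i r c : pr i (lC r c) = lC r (pr i c).
Proof.
have [Hc Ec] := decP c.
rewrite (@pr_dec i (lC r c) [seq (q.1, lC r q.2) | q <- dec c]).
  rewrite big_map /pr (lact_sum HlC); apply: eq_bigr => q _.
  by rewrite sel_map // lact0.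
split; first by apply: fam_in_map => // ? ?; exact: (lsub_lact (HDsub _)).
by rewrite big_map {1}Ec (lact_sum HlC).
Qed.

Lemma pr_lmorph i : lmorph lC lC (pr i).
Proof. by split; [exact: prD|exact: pr_lact]. Qed.

Lemma sel_sum_nodup (J : seq I) q : List.NoDup J -> List.In q.1 J ->
  \sum_(i <- J) sel i q = q.2.
Proof.
elim: J => [|j J IH] //= /List.NoDup_cons_iff [jJ nodupJ] [Ej|qJ]; rewrite big_cons.
- rewrite sel_at // (eq_big_In (G := fun _ => 0)) ?big1 ?addr0 // => i iJ.
  by apply: sel_off => Ei; apply: jJ; rewrite Ej Ei.
- by rewrite sel_off ?add0r ?IH // => Ej; apply: jJ; rewrite -Ej.
Qed.

Lemma sum_pr_cover (J : seq I) x : List.NoDup J ->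
  (forall q, List.In q (dec x) -> List.In q.1 J) -> \sum_(i <- J) pr i x = x.
Proof.
move=> nodupJ HJ; rewrite /pr exchange_big /= {2}(proj2 (decP x)).
by apply: eq_big_In => q sq; apply: sel_sum_nodup => //; exact: HJ.
Qed.

(* Since each D_j is a left subcomodule, convolution commutes with the
   projections: (f o pr_i) # h = (f # h) o pr_i. *)
Lemma conv_pr_entry i f h q : ldual lC f -> ldual lC h -> D q.1 q.2 ->
  dmul rC Delta (fun c => f (pr i c)) h q.2 = dmul rC Delta f h (sel i q).
Proof.
move=> Hf Hh Dq; have [_ /(_ _ Dq) [m [xs [ys [Dys Ey]]]]] := HDcomod q.1.
rewrite (conv_rep HC (ldual_comp (pr_lmorph i) Hf) Hh Ey).
case: (at_indexP i q) => Eq.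
- rewrite sel_at // (conv_rep HC Hf Hh Ey) !big_map; apply: eq_bigr => k _ /=.
  by rewrite pr_id // -Eq; exact: Dys.
- rewrite sel_off // (conv0 HC Hf Hh) big_map big1 // => k _ /=.
  by rewrite (pr_off (Dys k) Eq) (ldual0 Hf) (rC0 HC) (ldual0 Hh).
Qed.

Lemma conv_pr i f h c : ldual lC f -> ldual lC h ->
  dmul rC Delta (fun c => f (pr i c)) h c = dmul rC Delta f h (pr i c).
Proof.
move=> Hf Hh; have [Hc Ec] := decP c.
rewrite {1}Ec (conv_sum HC (ldual_comp (pr_lmorph i) Hf) Hh) [in RHS]/pr.
rewrite (conv_sum HC Hf Hh); apply: eq_big_In => q sq.
exact: conv_pr_entry (Hc q sq).
Qed.
End Projections.

(* Density of Rat^C( *C ): a form f agrees on a finite set F with the finite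
   sum of the forms f o pr_i over the indices i occurring in F, and each
   f o pr_i is rational since the summand D_i has a finite dual basis. *)
Section Density.
Variables (R : nzRingType) (C : zmodType) (lC : R -> C -> C) (rC : C -> R -> C)
  (Delta : C -> seq (C * C)) (eps : C -> R).
Hypotheses (HC : is_coring lC rC Delta eps) (Halpha : left_alpha_condition lC).
Variables (I : Type) (D : I -> C -> Prop).
Hypotheses (HDcomod : forall i, left_subcomod lC rC Delta (D i))
  (HDfg : forall i, fg_left lC (D i)) (HDsum : direct_sum D).

Local Notation pr := (pr HDsum).

Lemma summand_dual_basis i : exists n (gs : 'I_n -> C) (es : 'I_n -> C -> R),
  (forall k, ldual lC (es k)) /\ forall c, pr i c = \sum_(k < n) lC (es k c) (gs k).
Proof.
have [n [gs [Dgs span]]] := HDfg i.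
have [es [Hes Ees]] := finite_dual_basis (coring_lmod HC) Halpha
  (pr_lmorph HC HDcomod HDsum i) (fun k => pr_id HDcomod HDsum (Dgs k))
  (fun c => span _ (pr_mem HDcomod HDsum i c)).
by exists n, gs, es.
Qed.

(* With pr_i c = sum_k e_k(c) g_k one has
   (f o pr_i) # h = sum_k e_k # iota(h(g_k(1) f(g_k(2)))). *)
Lemma rat_comp_pr i f : ldual lC f -> rat_dual lC rC Delta eps (fun c => f (pr i c)).
Proof.
move=> Hf; have [n [gs [es [Hes Ees]]]] := summand_dual_basis i.
split; first exact: ldual_comp (pr_lmorph HC HDcomod HDsum i) Hf.
exists n, es, (fun k => \sum_(p <- Delta (gs k)) rC p.1 (f p.2)); split=> // h Hh c.
rewrite (conv_pr HC HDcomod HDsum i c Hf Hh) Ees (conv_sum HC Hf Hh).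
apply: eq_bigr => k _.
by rewrite (conv_lact HC Hf Hh) (conv_iota HC _ _ (Hes k)) /dmul (ldual_sum Hh).
Qed.

Lemma index_in_flatten (F : seq C) x q : x \in F -> List.In q (dec HDsum x) ->
  List.In q.1 (flatten [seq [seq p.1 | p <- dec HDsum y] | y <- F]).
Proof.
elim: F => [|y F IH] //; rewrite in_cons => /orP[/eqP-> | Fx] qx /=;
  apply: List.in_or_app; [left|right; exact: IH].
exact: (List.in_map (fun p : I * C => p.1)).
Qed.

Lemma rat_dense_of_decomposition : rat_dense lC rC Delta eps.
Proof.
move=> f Hf F.
pose eq_dec (i j : I) := excluded_middle_informative (i = j).
pose J := List.nodup eq_dec (flatten [seq [seq p.1 | p <- dec HDsum y] | y <- F]).
exists (fun c => \sum_(i <- J) f (pr i c)); split.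
  by apply: (rat_dual_sum HC) => i; exact: rat_comp_pr.
move=> x Fx; rewrite -(ldual_sum Hf) sum_pr_cover //; first exact: List.NoDup_nodup.
by move=> q qx; apply/List.nodup_In; exact: index_in_flatten qx.
Qed.
End Density.

Section Exactness.
Variables (R : nzRingType) (C : zmodType) (lC : R -> C -> C) (rC : C -> R -> C)
  (Delta : C -> seq (C * C)) (eps : C -> R).
Hypothesis HC : is_coring lC rC Delta eps.

Section ModuleAction.
Variables (M : zmodType) (act : M -> (C -> R) -> M).
Hypothesis Hact : rdmod_ax lC rC Delta eps act.

Lemma act_zero m : act m (fun _ => 0) = 0.
Proof.
have [_ actD _ _] := Hact.
have := actD m _ _ (zero_ldual lC) (zero_ldual lC).
rewrite (_ : (fun _ => _) = fun _ => 0); last first.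
  by apply: functional_extensionality => c; rewrite addr0.
by move=> E; apply/(addrI (act m (fun _ => 0))); rewrite addr0 -E.
Qed.

Lemma act_sum m (T : Type) (s : seq T) (F : T -> C -> R) :
  (forall t, ldual lC (F t)) ->
  act m (fun c => \sum_(t <- s) F t c) = \sum_(t <- s) act m (F t).
Proof.
have [_ actD _ _] := Hact; move=> HF; elim: s => [|t s IH].
  rewrite big_nil -(act_zero m); congr (act m _).
  by apply: functional_extensionality => c; rewrite big_nil.
rewrite big_cons -IH -actD //; last exact: ldual_big.
by congr (act m _); apply: functional_extensionality => c; rewrite big_cons.
Qed.
End ModuleAction.

(* If v y = 0 with y rational, write y = u x and y . f = sum_k y_k f(c_k); a
   rational g agreeing with eps on the c_k gives a rational x . g with
   u (x . g) = y . g = y . eps = y. *)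
Lemma exact_of_dense : rat_dense lC rC Delta eps -> rat_exact lC rC Delta eps.
Proof.
move=> Hd M1 M2 M3 a1 a2 a3 H1 H2 H3 u v Hu Hv Hex y [n [ys [cs Hy]]] vy0.
have [x ux] := proj1 (Hex y) vy0.
have [g [[Hg [m [hs [cs' [Hhs Eg]]]]] g_eps]] :=
  Hd eps (eps_ldual HC) [seq cs k | k <- enum 'I_n].
have [_ _ a1M _] := H1; have [_ _ _ a2eps] := H2.
exists (a1 x g); split.
- exists m, (fun k => a1 x (hs k)), cs' => f Hf.
  rewrite -a1M // (_ : dmul rC Delta g f = fun c => \sum_(k < m)
    dmul rC Delta (hs k) (Defs.iota eps (f (cs' k))) c); last first.
    by apply: functional_extensionality => c; exact: Eg.
  rewrite (act_sum H1); last by move=> k; exact: (conv_ldual HC (Hhs k) (iota_ldual HC _)).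
  by apply: eq_bigr => k _; rewrite -a1M //; exact: iota_ldual HC _.
- rewrite (proj2 Hu x g Hg) ux -[RHS]a2eps (Hy g Hg) (Hy eps (eps_ldual HC)).
  by apply: eq_bigr => k _; rewrite g_eps // map_f // mem_enum.
Qed.
End Exactness.

Theorem corollary2p6 (R : nzRingType) (C : zmodType)
  (lC : R -> C -> C) (rC : C -> R -> C)
  (Delta : C -> seq (C * C)) (eps : C -> R)
  (HC : is_coring lC rC Delta eps)
  (Halpha : left_alpha_condition lC)
  (I : Type) (D : I -> C -> Prop)
  (HDcomod : forall i, left_subcomod lC rC Delta (D i))
  (HDfg : forall i, fg_left lC (D i))
  (HDsum : direct_sum D) :
  rat_dense lC rC Delta eps /\ rat_exact lC rC Delta eps.
Proof.
have dense := rat_dense_of_decomposition HC Halpha HDcomod HDfg HDsum.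
by split; last exact: exact_of_dense.
Qed.
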